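(* Let $h_1',h_2',\dots$ be independent and uniformly distributed on $\mathcal{F}^d$, and let $h_i:=h_i'\circ\psi^{-1}$ (tasks on $\mathcal{X}$). Let $\Phi,\Phi':\{-1,1\}^m\to\mathcal{Z}$ be two fixed representations such that $T:=\Phi\circ\psi$ and $T':=\Phi'\circ\psi$ are bijections of $\mathcal{Z}$. For each $i$ let $g_i,g_i':\mathcal{Z}\to\mathbb{R}$ be the (unique) functions with $g_i\circ\Phi\in\mathcal{H}(h_i)$ and $g_i'\circ\Phi'\in\mathcal{H}(h_i)$, and set $g=(g_1,\dots,g_n)$, $g'=(g_1',\dots,g_n')$. Then, almost surely, $$\lim_{n\to\infty}\frac1n\Big(\widehat{\deg}(g\circ\Phi)-\widehat{\deg}(g'\circ\Phi')\Big)=0,$$ where $\widehat{\deg}(g\circ\Phi)=\sum_{i=1}^n\deg(g_i)+\sum_{j=1}^d\deg(\Phi_j)$ and similarly for $g'\circ\Phi'$.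
   Context: Standing setup: integers $m\ge d\ge 1$, $\mathcal{Z}=\{-1,1\}^d$, $\psi:\mathcal{Z}\to\{-1,1\}^m$ injective, $\mathcal{X}:=\psi(\mathcal{Z})$, latent distribution with full support on $\mathcal{Z}$. For $f:\{-1,1\}^n\to\mathbb{R}$ with Fourier–Walsh expansion $f=\sum_{S\subseteq[n]}\hat f(S)\chi_S$, $\chi_S(x)=\prod_{i\in S}x_i$, $\deg(f)=\max\{|S|:\hat f(S)\ne0\}$ (0 for constants). Tasks are functions on $\mathcal{X}$ (extended arbitrarily to $\{-1,1\}^m$); $\mathcal{H}(h)$ is the set of $f:\{-1,1\}^m\to\mathbb{R}$ agreeing with $h$ on $\mathcal{X}$. Finite-precision convention: fix a finite set $V\subset\mathbb{R}$ with $\{-1,1\}\subseteq V$ and let $\mathcal{F}^d$ be the (finite) set of all functions $\{-1,1\}^d\to V$. *)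

From HB Require Import structures.
From mathcomp Require Import all_boot all_order all_algebra.
From mathcomp Require Import all_classical all_reals all_analysis.
Set Implicit Arguments. Unset Strict Implicit. Unset Printing Implicit Defensive.
Import Order.TTheory GRing.Theory Num.Theory.
Local Open Scope ring_scope.

(* The hypercube {-1,1}^n, encoded as boolean vectors: a coordinate b : bool
   stands for the real number (-1)^b (false |-> 1, true |-> -1). *)
Definition cube (n : nat) : finType := {ffun 'I_n -> bool}.

Definition sgnb (R : ringType) (b : bool) : R := (-1) ^+ b.

Definition walsh (R : ringType) (n : nat) (S : {set 'I_n}) (x : cube n) : R :=
  \prod_(i in S) sgnb R (x i).

Definition fourier (R : fieldType) (n : nat) (f : cube n -> R) (S : {set 'I_n}) : R :=
  (#|cube n|%:R)^-1 * \sum_(x : cube n) f x * walsh R S x.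

(* deg f = max{|S| : hat f(S) <> 0}, 0 if there is no such S *)
Definition wdeg (R : fieldType) (n : nat) (f : cube n -> R) : nat :=
  \max_(S : {set 'I_n} | fourier f S != 0) #|S|.

Definition coord_fun (R : ringType) (m d : nat) (Phi : cube m -> cube d) (j : 'I_d)
  : cube m -> R := fun x => sgnb R (Phi x j).

Definition deghat (R : fieldType) (m d : nat) (g : nat -> cube d -> R)
  (Phi : cube m -> cube d) (n : nat) : nat :=
  (\sum_(i < n) wdeg (g i) + \sum_(j < d) wdeg (coord_fun R Phi j))%N.

(* With [T = Phi o psi] we have [g_i = h_i' o T^-1], so the estimated degrees
   differ by [sum_(i < n) phi (h_i') + c], where [c] is the difference of the
   coordinate degrees of [Phi] and [Phi'] and [phi h = deg (h o T^-1) - deg (h o T'^-1)].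
   Precomposition with the bijection [T^-1] permutes the V-valued functions on the
   cube, so [phi] has mean zero under the uniform law, and [|phi| <= d].  The claim
   is thus a strong law of large numbers for i.i.d. bounded centred variables:
   Chebyshev's inequality along the squares [n = (k+1)^2] gives summable deviation
   probabilities, Borel-Cantelli makes the deviations eventually small almost
   surely, and boundedness interpolates between consecutive squares. *)

From HB Require Import structures.
From mathcomp Require Import all_boot all_order all_algebra.
From mathcomp Require Import all_classical all_reals all_analysis.
From mathcomp Require Import ring lra zify.
Set Implicit Arguments. Unset Strict Implicit. Unset Printing Implicit Defensive.
Import Order.TTheory GRing.Theory Num.Theory numFieldNormedType.Exports.
Local Open Scope ring_scope.
Local Open Scope classical_set_scope.

Lemma exists_sqr_bracket n : (0 < n)%N -> exists k, ((k.+1) ^ 2 <= n < (k.+2) ^ 2)%N.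
Proof.
elim: n => // -[_ _|n IH _]; first by exists 0%N.
have [k /andP[lo hi]] := IH isT.
have [nk|kn] := ltnP n.+2 (k.+2 ^ 2)%N; first by exists k; rewrite nk leqW.
by exists k.+1; move: hi kn; rewrite !expnS !expn0 !muln1; lia.
Qed.

Lemma norm_sum_between_sqr (R : realFieldType) (x : nat -> R) (M c e : R) (k n : nat) :
  (forall i, `|x i| <= M) -> ((k.+1) ^ 2 <= n < (k.+2) ^ 2)%N ->
  `|\sum_(i < (k.+1) ^ 2) x i| <= e * ((k.+1) ^ 2)%:R ->
  3 * M + `|c| <= e * k.+1%:R ->
  `|\sum_(i < n) x i + c| <= 2 * e * n%:R.
Proof.
move=> xM /andP[lo hi] head_le tail_le.
have M0 : 0 <= M := le_trans (normr_ge0 _) (xM 0%N).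
set m := ((k.+1) ^ 2)%N in lo hi head_le.
have e0 : 0 <= e.
  have : 0 <= 3 * M + `|c| by rewrite addr_ge0 ?mulr_ge0.
  by move=> /le_trans /(_ tail_le); rewrite pmulr_lge0.
rewrite -!(big_mkord xpredT) (@big_cat_nat _ _ _ m 0 n _ _ (leq0n m) lo) /= big_mkord.
have gap_le : `|\sum_(m <= i < n) x i| <= (n - m)%:R * M.
  apply: le_trans (ler_norm_sum _ _ _) _.
  by rewrite mulr_natl -sumr_const_nat; apply: ler_sum => i _.
have gap : (n - m)%:R <= 2 * k.+1%:R :> R.
  by rewrite -natrM ler_nat; move: hi; rewrite /m !expnS !expn0 !muln1; lia.
have mn : m%:R <= n%:R :> R by rewrite ler_nat.
have mk : m%:R = k.+1%:R * k.+1%:R :> R by rewrite /m -natrM expnS expn1.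
rewrite mk in head_le mn.
have k1 : 1 <= k.+1%:R :> R by rewrite ler1n.
have := ler_wpM2r M0 gap; have := normr_ge0 c.
have := ler_normD (\sum_(i < m) x i + \sum_(m <= i < n) x i) c.
have := ler_normD (\sum_(i < m) x i) (\sum_(m <= i < n) x i).
nra.
Qed.

Lemma cvg_mean_from_sqr (R : realType) (x : nat -> R) (M c : R) :
  (forall i, `|x i| <= M) ->
  (forall j, exists k0, forall k, (k0 <= k)%N ->
      `|\sum_(i < (k.+1) ^ 2) x i| <= j.+1%:R^-1 * ((k.+1) ^ 2)%:R) ->
  (fun n => n%:R^-1 * (\sum_(i < n) x i + c)) @ \oo --> (0 : R).
Proof.
move=> xM sqr_small; apply/cvgr0Pnorm_le => eps eps0.
set e := eps / 2; have e0 : 0 < e by rewrite divr_gt0.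
pose j := Num.Def.archi_bound e^-1.
have je : j.+1%:R^-1 <= e.
  rewrite -[e]invrK lef_pV2 ?posrE ?invr_gt0 //.
  apply: le_trans (ltW (archi_boundP _)) _; first by rewrite invr_ge0 ltW.
  by rewrite ler_nat.
have [k0 hk0] := sqr_small j.
have M0 : 0 <= M := le_trans (normr_ge0 _) (xM 0%N).
have C0 : 0 <= (3 * M + `|c|) / e.
  by apply: divr_ge0; [rewrite addr_ge0 ?mulr_ge0 | exact: ltW].
pose K := maxn k0 (Num.Def.archi_bound ((3 * M + `|c|) / e)).
near=> n.
have n0 : (0 < n)%N by near: n; exact: nbhs_infty_gt.
have nK : ((K.+1) ^ 2 <= n)%N by near: n; exact: nbhs_infty_ge.
have [k /andP[lo hi]] := exists_sqr_bracket n0.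
have Kk : (K <= k)%N by move: (leq_ltn_trans nK hi); rewrite ltn_exp2r.
have head_le : `|\sum_(i < (k.+1) ^ 2) x i| <= e * ((k.+1) ^ 2)%:R.
  by apply: le_trans (hk0 k _) _; [exact: leq_trans (leq_maxl _ _) Kk | rewrite ler_wpM2r].
have tail_le : 3 * M + `|c| <= e * k.+1%:R.
  rewrite -ler_pdivrMl // mulrC; apply: le_trans (ltW (archi_boundP C0)) _.
  by rewrite ler_nat leqW // (leq_trans (leq_maxr _ _) Kk).
have := norm_sum_between_sqr xM (introT andP (conj lo hi)) head_le tail_le.
rewrite normrM normfV normr_nat ler_pdivrMl ?ltr0n // => /le_trans; apply.
by rewrite [X in _ <= X]mulrC ler_wpM2r ?ler0n // /e; lra.
Unshelve. all: by end_near.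
Qed.

Lemma sum_inv_sqr_le (R : realFieldType) n :
  \sum_(0 <= k < n) ((k.+1 ^ 2)%N%:R : R)^-1 <= 2 - 2 / n.+1%:R.
Proof.
elim: n => [|n IH]; first by rewrite big_geq // divr1 subrr.
rewrite big_nat_recr //=; apply: le_trans (lerD IH (lexx _)) _.
rewrite natrX -[n.+2%:R]natr1; set a : R := n.+1%:R.
have a1 : 1 <= a by rewrite ler1n.
have tele : 2 / a - 2 / (a + 1) - (a ^+ 2)^-1 = (a - 1) / (a ^+ 2 * (a + 1)).
  by field; rewrite !gt_eqF //; lra.
have : 0 <= (a - 1) / (a ^+ 2 * (a + 1)) by rewrite divr_ge0 ?mulr_ge0 ?sqr_ge0 //; lra.
by rewrite -tele; clearbody a; lra.
Qed.

Lemma nneseries_inv_sqr_lty (R : realType) (C : R) : 0 <= C ->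
  (\sum_(0 <= k <oo) (C / (k.+1 ^ 2)%N%:R)%:E < +oo)%E.
Proof.
move=> C0; apply: (@le_lt_trans _ _ (C * 2)%:E); last exact: ltry.
rewrite (cvg_lim _ (ereal_nondecreasing_cvgn _)) //; last first.
  by apply: ereal_nondecreasing_series => n _ _; rewrite lee_fin divr_ge0.
apply/ereal_supP => _ [n _ <-] /=.
rewrite sumEFin lee_fin -mulr_sumr ler_wpM2l //.
by apply: le_trans (sum_inv_sqr_le R n) _; rewrite gerBl divr_ge0.
Qed.

Section chebyshev_count.
Variables (R : realFieldType) (K : finType) (y : K -> R).
Hypothesis y_mean0 : \sum_k y k = 0.

Lemma sum_ffun_cross_mean0 n (i j : 'I_n) : i != j ->
  \sum_(t : {ffun 'I_n -> K}) y (t i) * y (t j) = 0.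
Proof.
move=> ij; pose g l k := (if l == i then y k else 1) * (if l == j then y k else 1).
transitivity (\sum_(t : {ffun 'I_n -> K}) \prod_l g l (t l)).
  apply: eq_bigr => t _; rewrite /g big_split /=.
  by rewrite -!big_mkcond /= !big_pred1_eq.
rewrite -bigA_distr_bigA (bigD1 i) //= /g eqxx (negbTE ij).
by rewrite (eq_bigr y) ?y_mean0 ?mul0r // => k _; rewrite mulr1.
Qed.

Lemma sum_ffun_sqr_sum n :
  \sum_(t : {ffun 'I_n -> K}) (\sum_(i < n) y (t i)) ^+ 2 =
  \sum_(i < n) \sum_(t : {ffun 'I_n -> K}) y (t i) ^+ 2.
Proof.
transitivity (\sum_(t : {ffun 'I_n -> K}) \sum_(i < n) \sum_(j < n) y (t i) * y (t j)).
  apply: eq_bigr => t _; rewrite expr2 mulr_suml; apply: eq_bigr => i _.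
  by rewrite mulr_sumr.
rewrite exchange_big; apply: eq_big => // i _.
rewrite exchange_big (bigD1 i) //= [X in _ + X]big1 ?addr0.
  by apply: eq_bigr => t _; rewrite expr2.
by move=> j ji; rewrite sum_ffun_cross_mean0 // eq_sym.
Qed.

Variable M : R.
Hypothesis y_le : forall k, `|y k| <= M.

Lemma sum_ffun_sqr_sum_le n :
  \sum_(t : {ffun 'I_n -> K}) (\sum_(i < n) y (t i)) ^+ 2
    <= n%:R * (#|K| ^ n)%:R * M ^+ 2.
Proof.
rewrite sum_ffun_sqr_sum.
apply: (@le_trans _ _ (\sum_(i < n) \sum_(t : {ffun 'I_n -> K}) M ^+ 2)).
  apply: ler_sum => i _; apply: ler_sum => t _.
  have M0 : 0 <= M := le_trans (normr_ge0 _) (y_le (t i)).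
  rewrite -[y (t i) ^+ 2]real_normK ?num_real // ler_sqr ?nnegrE //.
by rewrite !sumr_const card_ffun !card_ord -mulrnA -natrM mulr_natl mulnC.
Qed.

Lemma card_large_sum_le (e : R) n : 0 < e -> (0 < n)%N ->
  #|[set t : {ffun 'I_n -> K} | e * n%:R < `|\sum_(i < n) y (t i)|]%SET|%:R
    * (e ^+ 2 * n%:R) <= (#|K| ^ n)%:R * M ^+ 2.
Proof.
move=> e0 n0; set A := [set t | _]%SET.
have large_le : #|A|%:R * (e * n%:R) ^+ 2
    <= \sum_(t : {ffun 'I_n -> K}) (\sum_(i < n) y (t i)) ^+ 2.
  rewrite mulr_natl -sumr_const.
  apply: (@le_trans _ _ (\sum_(t in A) (\sum_(i < n) y (t i)) ^+ 2)).
    apply: ler_sum => t; rewrite inE => /ltW large.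
    rewrite -[(\sum_(i < n) _) ^+ 2]real_normK ?num_real // ler_sqr ?nnegrE //.
    by rewrite mulr_ge0 ?ler0n ?ltW.
  rewrite [X in _ <= X](bigID (mem A)) /= lerDl.
  by apply: sumr_ge0 => t _; exact: sqr_ge0.
rewrite -(ler_pM2r (_ : 0 < n%:R)) ?ltr0n //.
have -> : #|A|%:R * (e ^+ 2 * n%:R) * n%:R = #|A|%:R * (e * n%:R) ^+ 2 by ring.
have -> : (#|K| ^ n)%:R * M ^+ 2 * n%:R = n%:R * (#|K| ^ n)%:R * M ^+ 2 by ring.
exact: le_trans large_le (sum_ffun_sqr_sum_le n).
Qed.

End chebyshev_count.

Section measure_big_setU.
Context d (T : measurableType d) (R : realType) (mu : {measure set T -> \bar R}).
Local Open Scope ereal_scope.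

Lemma measure_bigsetU_le (I : Type) (r : seq I) (P : pred I) (F : I -> set T) :
  (forall i, measurable (F i)) ->
  mu (\big[setU/set0]_(i <- r | P i) F i) <= \sum_(i <- r | P i) mu (F i).
Proof.
move=> mF; elim: r => [|a r IH]; first by rewrite !big_nil measure0.
rewrite !big_cons; case: (P a) => //.
apply: le_trans (measureU2 _ _ _) _ => //; first exact: bigsetU_measurable.
exact: leeD2l.
Qed.

Lemma measure_bigsetU_disjoint (I : eqType) (r : seq I) (F : I -> set T) :
  uniq r -> (forall i, measurable (F i)) ->
  (forall i j, i != j -> F i `&` F j = set0) ->
  mu (\big[setU/set0]_(i <- r) F i) = \sum_(i <- r) mu (F i).
Proof.
move=> + mF dF; elim: r => [|a r IH]; first by rewrite !big_nil measure0.
rewrite /= => /andP[ar ur]; rewrite !big_cons measureU //.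
- by congr (_ + _); exact: IH.
- exact: bigsetU_measurable.
rewrite big_distrr /= big1_seq // => i /andP[_ ir]; apply: dF.
by apply: contraNneq ar => ->.
Qed.

End measure_big_setU.

Section strong_law_uniform.
Context (R : realType) (d : measure_display) (Omega : measurableType d)
  (P : probability Omega R).
Variables (K : finType) (T : eqType) (emb : K -> T) (k0 : K) (X : nat -> Omega -> T).
Hypothesis emb_inj : injective emb.
Hypothesis X_measurable : forall i t, measurable [set w | X i w = t].
Hypothesis X_uniform : forall i k, P [set w | X i w = emb k] = (#|K|%:R^-1)%:E.
Hypothesis X_indep : forall (s : seq nat) (f : nat -> T), uniq s ->
  P (\bigcap_(i in [set` s]) [set w | X i w = f i]) =
  (\prod_(i <- s) P [set w | X i w = f i])%E.
Variables (phi : T -> R) (M : R).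
Hypothesis phi_le : forall t, `|phi t| <= M.
Hypothesis phi_mean0 : \sum_k phi (emb k) = 0.

Let card_K_gt0 : (0 < #|K|)%N.
Proof. by apply/card_gt0P; exists k0. Qed.

Definition in_range i := \big[setU/set0]_(k : K) [set w | X i w = emb k].

Lemma prob_in_range i : P (in_range i) = 1%E.
Proof.
rewrite measure_bigsetU_disjoint ?index_enum_uniq //.
  rewrite (eq_bigr _ (fun k _ => X_uniform i k)) sumEFin sumr_const.
  by rewrite (_ : #|xpredT| = #|K|) // -[_^-1 *+ _]mulr_natr mulVf // pnatr_eq0 -lt0n.
move=> k k' kk'; apply/seteqP; split => w //= [-> Xk'].
by move: kk'; rewrite -(inj_eq emb_inj) Xk' eqxx.
Qed.

Lemma negligible_out_of_range : P.-negligible (\bigcup_i ~` in_range i).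
Proof.
apply: negligible_bigcup => i.
have mU : measurable (in_range i) by apply: bigsetU_measurable => k _.
apply/negligibleP; first exact: measurableC.
transitivity (1 - P (in_range i))%E; first exact: probability_setC.
by rewrite prob_in_range subee.
Qed.

(* The default [k0] only fills the indices [i >= n], which [cylinder] never reads. *)
Definition extend n (t : {ffun 'I_n -> K}) (i : nat) : K :=
  if insub i is Some o then t o else k0.

Definition cylinder n (t : {ffun 'I_n -> K}) :=
  \bigcap_(i in [set` index_iota 0 n]) [set w | X i w = emb (extend t i)].

Lemma cylinder_measurable n (t : {ffun 'I_n -> K}) : measurable (cylinder t).
Proof. by apply: bigcap_measurableType. Qed.

Lemma prob_cylinder n (t : {ffun 'I_n -> K}) : P (cylinder t) = ((#|K|%:R^-1) ^+ n)%:E.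
Proof.
rewrite /cylinder X_indep ?iota_uniq // (eq_bigr _ (fun i _ => X_uniform i _)).
by rewrite prodEFin prodr_const_nat subn0.
Qed.

Lemma cylinder_of_values n w (f : nat -> K) :
  (forall i, X i w = emb (f i)) -> cylinder [ffun i : 'I_n => f i] w.
Proof.
move=> Xf i /=; rewrite mem_index_iota /extend Xf => /andP[_ lt_in].
by case: insubP => [u _ <- | ]; rewrite ?ffunE ?lt_in.
Qed.

Definition large_dev j n : {set {ffun 'I_n -> K}} :=
  [set t : {ffun 'I_n -> K} | j.+1%:R^-1 * n%:R < `|\sum_(i < n) phi (emb (t i))|]%SET.

Definition large_dev_event j k :=
  \big[setU/set0]_(t in large_dev j (k.+1 ^ 2)) cylinder t.

Lemma prob_large_dev_le j k :
  (P (large_dev_event j k) <= ((M * j.+1%:R) ^+ 2 / (k.+1 ^ 2)%N%:R)%:E)%E.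
Proof.
set n := (k.+1 ^ 2)%N; set J : R := j.+1%:R; set A := large_dev j n.
apply: le_trans (measure_bigsetU_le _ _ _ (@cylinder_measurable n)) _.
rewrite (eq_bigr _ (fun t _ => prob_cylinder t)) sumEFin sumr_const lee_fin.
rewrite -[_ *+ #|A|]mulr_natl exprVn.
have n_gt0 : (0 < n)%N by rewrite expn_gt0.
have Jinv_gt0 : 0 < J^-1 by rewrite invr_gt0 ltr0n.
have cheb := card_large_sum_le phi_mean0 (fun k => phi_le (emb k)) Jinv_gt0 n_gt0.
rewrite natrX in cheb; set Kn := #|K|%:R ^+ n in cheb *.
have KnN0 : Kn != 0 by rewrite expf_neq0 // pnatr_eq0 -lt0n card_K_gt0.
have nN0 : n%:R != 0 :> R by rewrite pnatr_eq0 -lt0n.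
pose scale := J ^+ 2 / (Kn * n%:R).
have scale_ge0 : 0 <= scale by rewrite divr_ge0 ?mulr_ge0 ?exprn_ge0 ?sqr_ge0.
have lhs : #|A|%:R * (J^-1 ^+ 2 * n%:R) * scale = #|A|%:R * Kn^-1.
  by rewrite /scale; field; rewrite KnN0 nN0 nat1r pnatr_eq0.
have rhs : Kn * M ^+ 2 * scale = (M * J) ^+ 2 / n%:R.
  by rewrite /scale; field; rewrite ?KnN0 ?nN0.
rewrite -lhs -rhs; move: (ler_wpM2r scale_ge0 cheb); rewrite /A /large_dev; apply.
Qed.

Lemma large_dev_event_measurable j k : measurable (large_dev_event j k).
Proof. by apply: bigsetU_measurable => t _; exact: cylinder_measurable. Qed.

Lemma negligible_limsup_large_dev j : P.-negligible (lim_sup_set (large_dev_event j)).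
Proof.
apply/negligibleP.
  apply: bigcap_measurableType => n _; apply: bigcup_measurable => k _.
  exact: large_dev_event_measurable.
apply: lim_sup_set_cvg0; first exact: large_dev_event_measurable.
have C_ge0 : 0 <= (M * j.+1%:R) ^+ 2 by exact: sqr_ge0.
apply: le_lt_trans (nneseries_inv_sqr_lty C_ge0).
by apply: lee_nneseries => [k _ _|k _]; [exact: measure_ge0 | exact: prob_large_dev_le].
Qed.

Theorem ae_cvg_mean_uniform (c : R) :
  {ae P, forall w, (fun n => n%:R^-1 * (\sum_(i < n) phi (X i w) + c)) @ \oo --> 0}.
Proof.
(* Off [null], each [X i w] is some [emb k], and for every [j] the [j]-th deviation
   along the squares happens only finitely often. *)
have null := negligibleU negligible_out_of_range
  (negligible_bigcup negligible_limsup_large_dev).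
apply: (negligibleS _ null) => w /=; apply: contra_notP => not_null.
have w_in_range i : in_range i w.
  by apply: contrapT => out; apply: not_null; left; exists i.
have w_limsup j : ~ lim_sup_set (large_dev_event j) w.
  by move=> h; apply: not_null; right; exists j.
pose idx i := if [pick k | X i w == emb k] is Some k then k else k0.
have X_idx i : X i w = emb (idx i).
  rewrite /idx; case: pickP => [k /eqP -> //|none].
  have := w_in_range i; rewrite /in_range -bigcup_seq => -[k _ Xk].
  by move: (none k); rewrite Xk eqxx.
apply: cvg_mean_from_sqr (fun i => phi_le (X i w)) _ => j.
have [N large_before_N] : exists N, forall k, (N <= k)%N -> ~ large_dev_event j k w.
  apply: contrapT => never; apply: (w_limsup j) => N _.
  apply: contrapT => hN; apply: never; exists N => k Nk ev; apply: hN; by exists k.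
exists N => k /large_before_N not_large; rewrite leNgt; apply/negP => large.
apply: not_large; rewrite /large_dev_event -bigcup_seq_cond.
exists [ffun i : 'I_(k.+1 ^ 2) => idx i]; last exact: cylinder_of_values.
apply/andP; split; first exact: mem_index_enum.
by rewrite inE; under eq_bigr do rewrite ffunE -X_idx.
Qed.

End strong_law_uniform.

Lemma wdeg_le (R : fieldType) n (f : cube n -> R) : (wdeg f <= n)%N.
Proof.
apply/bigmax_leqP => S _.
by rewrite -[X in (_ <= X)%N](card_ord n) max_card.
Qed.

Lemma normr_natB_le (R : realDomainType) (a b n : nat) :
  (a <= n)%N -> (b <= n)%N -> `|a%:R - b%:R : R| <= n%:R.
Proof.
rewrite -!(ler_nat R) => ha hb; have := ler0n R a; have := ler0n R b.
by rewrite ler_norml; move: ha hb; set x := a%:R; set y := b%:R; set z := n%:R => *; lra.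
Qed.

Lemma sum_ffun_comp (A B : finType) (U : nmodType) (F : (A -> B) -> U) (s : A -> A) :
  bijective s -> \sum_(k : {ffun A -> B}) F (k \o s) = \sum_(k : {ffun A -> B}) F k.
Proof.
case=> s' ss' s's.
have comp_inj : injective (fun k : {ffun A -> B} => [ffun x => k (s x)]).
  by move=> k1 k2 /ffunP eq12; apply/ffunP => x; have := eq12 (s' x); rewrite !ffunE s's.
rewrite [RHS](reindex_inj comp_inj); apply: eq_bigr => k _.
by congr F; apply/funext => x; rewrite ffunE.
Qed.

Section degree_gap.
Variables (R : fieldType) (d : nat) (Ti Ti' : cube d -> cube d).

Definition deg_gap (h : {ffun cube d -> R}) : R :=
  (wdeg (h \o Ti))%:R - (wdeg (h \o Ti'))%:R.

Definition embV (V : seq R) (k : {ffun cube d -> 'I_(size V)}) : {ffun cube d -> R} :=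
  [ffun x => nth 0 V (k x)].

Lemma embV_inj V : uniq V -> injective (@embV V).
Proof.
move=> uV k1 k2 /ffunP eq12; apply/ffunP => x; apply: val_inj.
by have /eqP := eq12 x; rewrite !ffunE nth_uniq // => /eqP.
Qed.

Lemma sum_deg_gap_embV V : bijective Ti -> bijective Ti' ->
  \sum_k deg_gap (@embV V k) = 0.
Proof.
move=> bij bij'; rewrite sumrB.
have sum_comp (s : cube d -> cube d) : bijective s ->
    \sum_(k : {ffun cube d -> 'I_(size V)}) ((wdeg (embV k \o s))%:R : R) =
    \sum_(k : {ffun cube d -> 'I_(size V)}) (wdeg (fun x => nth 0 V (k x)))%:R.
  move=> bij_s; rewrite -(sum_ffun_comp
    (fun f : cube d -> 'I_(size V) => (wdeg (fun x => nth 0 V (f x)))%:R) bij_s).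
  by apply: eq_bigr => k _; congr (_%:R); congr wdeg; apply/funext => x; rewrite /= ffunE.
by rewrite !sum_comp ?subrr.
Qed.

Lemma deghat_diff m (psi : cube d -> cube m) (Phi Phi' : cube m -> cube d)
    (G G' : nat -> cube d -> R) (H : nat -> {ffun cube d -> R}) n :
  cancel Ti (Phi \o psi) -> cancel Ti' (Phi' \o psi) ->
  (forall i z, G i (Phi (psi z)) = H i z) -> (forall i z, G' i (Phi' (psi z)) = H i z) ->
  (deghat G Phi n)%:R - (deghat G' Phi' n)%:R =
  \sum_(i < n) deg_gap (H i) +
  ((\sum_(j < d) wdeg (coord_fun R Phi j))%:R - (\sum_(j < d) wdeg (coord_fun R Phi' j))%:R).
Proof.
move=> TiK Ti'K HG HG'.
have transport (g : cube d -> R) h T Tinv : cancel Tinv T -> (forall z, g (T z) = h z) ->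
    wdeg g = wdeg (h \o Tinv).
  by move=> K gh; congr wdeg; apply/funext => y /=; rewrite -gh K.
rewrite /deghat !natrD !natr_sum sumrB opprD addrACA.
congr (_ - _ + _); apply: eq_bigr => i _; congr (_%:R).
- exact: transport TiK (HG i).
- exact: transport Ti'K (HG' i).
Qed.

End degree_gap.

Lemma deg_gap_le (R : realFieldType) d (Ti Ti' : cube d -> cube d) h :
  `|deg_gap Ti Ti' h : R| <= d%:R.
Proof. by rewrite normr_natB_le ?wdeg_le. Qed.

Theorem theorem3 (R : realType) (d0 : measure_display) (Omega : measurableType d0)
  (P : probability Omega R)
  (m d : nat) (V : seq R) (psi : cube d -> cube m)
  (Phi Phi' : cube m -> cube d)
  (H : nat -> Omega -> {ffun cube d -> R})
  (G G' : nat -> Omega -> cube d -> R) :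
  (1 <= d)%N -> (d <= m)%N ->
  uniq V -> (-1) \in V -> 1 \in V ->
  injective psi ->
  bijective (Phi \o psi) -> bijective (Phi' \o psi) ->
  (* each h_i' is a random element of F^d *)
  (forall i (f : {ffun cube d -> R}), measurable [set w | H i w = f]) ->
  (* uniformly distributed on F^d = functions {-1,1}^d -> V *)
  (forall i (f : {ffun cube d -> R}), (forall x, f x \in V) ->
     P [set w | H i w = f] = (((size V) ^ #|cube d|)%:R)^-1%:E) ->
  (* mutually independent *)
  (forall (s : seq nat) (f : nat -> {ffun cube d -> R}), uniq s ->
     P (\bigcap_(i in [set` s]) [set w | H i w = f i]) =
     (\prod_(i <- s) P [set w | H i w = f i])%E) ->
  (* g_i o Phi agrees with h_i = h_i' o psi^{-1} on X = psi(Z); likewise g_i' o Phi' *)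
  (forall i w z, G i w (Phi (psi z)) = H i w z) ->
  (forall i w z, G' i w (Phi' (psi z)) = H i w z) ->
  {ae P, forall w,
     (fun n : nat => n%:R^-1 *
        ((deghat (G ^~ w) Phi n)%:R - (deghat (G' ^~ w) Phi' n)%:R) : R)
       @ \oo --> (0 : R)}.
Proof.
move=> _ _ uV _ V1 _ [Ti TK KT] [Ti' TK' KT'] H_meas H_unif H_indep HG HG'.
have V_gt0 : (0 < size V)%N by rewrite lt0n size_eq0; apply: contraTneq V1 => ->.
pose k0 : {ffun cube d -> 'I_(size V)} := [ffun=> Ordinal V_gt0].
have embV_unif i (k : {ffun cube d -> 'I_(size V)}) :
    P [set w | H i w = embV k] = (#|{ffun cube d -> 'I_(size V)}|%:R^-1)%:E.
  by rewrite H_unif ?card_ffun ?card_ord // => x; rewrite ffunE mem_nth.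
set c : R := (\sum_(j < d) wdeg (coord_fun R Phi j))%:R -
             (\sum_(j < d) wdeg (coord_fun R Phi' j))%:R.
have := ae_cvg_mean_uniform k0 (embV_inj uV) H_meas embV_unif H_indep
  (@deg_gap_le _ _ Ti Ti') (sum_deg_gap_embV V (Bijective KT TK) (Bijective KT' TK')) c.
apply: filterS => w cvg_w.
rewrite (eq_cvg _ _ (g := fun n => n%:R^-1 * (\sum_(i < n) deg_gap Ti Ti' (H i w) + c))) //.
by move=> n; congr (_ * _); exact: deghat_diff n KT KT' (fun i => HG i w) (fun i => HG' i w).
Qed.
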